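(* Let $\Lambda$ be a row-finite $k$-graph with no sources and let $\{t_\lambda\}_{\lambda\in\Lambda}$ be a permutative representation of $C^*(\Lambda)$ on $\mathcal H$, with orthonormal basis $\{e_i\}_{i\in I}$, sets $J_\lambda,K_\lambda\subseteq I$ and bijections $\tilde\sigma_\lambda:J_\lambda\to K_\lambda$ as in the definition of permutative representation. Then for every $n\in\mathbb N^k$ and all $\lambda,\lambda'\in\Lambda^n$ with $\lambda\neq\lambda'$, we have $K_\lambda\cap K_{\lambda'}=\emptyset$.
   Context: A $k$-graph ($k\ge1$) is a countable small category $\Lambda$ with a functor $d:\Lambda\to\mathbb N^k$ satisfying unique factorization: if $d(\lambda)=m+n$ there are unique $\mu,\nu$ with $\lambda=\mu\nu$, $d(\mu)=m$, $d(\nu)=n$. $\Lambda^0$ = vertices, $r,s$ = range, source, $\Lambda^n=d^{-1}(n)$, $v\Lambda^n=\{\lambda\in\Lambda^n:r(\lambda)=v\}$, $s(\lambda)\Lambda=\{\nu:r(\nu)=s(\lambda)\}$; row-finite: each $v\Lambda^n$ finite; no sources: each $v\Lambda^n$ nonempty. A representation of $C^*(\Lambda)$ is a family of partial isometries $\{t_\lambda\}$ on a Hilbert space satisfying (CK1) $\{t_v\}$ mutually orthogonal projections, (CK2) $t_\lambda t_\eta=t_{\lambda\eta}$ when $s(\lambda)=r(\eta)$, (CK3) $t_\lambda^*t_\lambda=t_{s(\lambda)}$, (CK4) $t_v=\sum_{\lambda\in v\Lambda^n}t_\lambda t_\lambda^*$. It is permutative if $\mathcal H$ has an orthonormal basis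 $\{e_i\}_{i\in I}$ such that for each $\lambda$ there are $J_\lambda,K_\lambda\subseteq I$ and a bijection $\tilde\sigma_\lambda:J_\lambda\to K_\lambda$ with: (a) for each $n$, $\bigcup_{\lambda\in\Lambda^n}J_\lambda=\bigcup_{\lambda\in\Lambda^n}K_\lambda=I$; (b) for $\lambda\in\Lambda$, $\nu\in s(\lambda)\Lambda$: $K_\nu\subseteq J_\lambda$ and $\tilde\sigma_\lambda\circ\tilde\sigma_\nu=\tilde\sigma_{\lambda\nu}$; (c) $t_\lambda e_i=e_{\tilde\sigma_\lambda(i)}$ for $i\in J_\lambda$ and $t_\lambda e_i=0$ for $i\notin J_\lambda$; (d) $t_\lambda^*e_{\tilde\sigma_\lambda(i)}=e_i$ for $i\in J_\lambda$, and $t_\lambda^*e_j=0$ for $j\in K_{\lambda'}$ whenever $\lambda'\neq\lambda$, $d(\lambda')=d(\lambda)$. *)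

From HB Require Import structures.
From mathcomp Require Import all_boot all_order all_algebra complex.
From mathcomp Require Import reals.
Set Implicit Arguments. Unset Strict Implicit. Unset Printing Implicit Defensive.
Import Order.TTheory GRing.Theory Num.Theory.
Local Open Scope ring_scope.

Definition deg (k : nat) := {ffun 'I_k -> nat}.
Definition deg0 (k : nat) : deg k := [ffun _ => 0%N].
Definition degD (k : nat) (m n : deg k) : deg k := [ffun i => (m i + n i)%N].

(* A k-graph: a countable small category (objects kg_obj, morphisms    *)
(* kg_mor) with a degree functor d : Lambda -> N^k satisfying unique   *)
(* factorisation.  kg_comp l m is the composite "l m" (defined when    *)
(* s l = r m); its value when not composable is irrelevant.            *)
Record kgraph (k : nat) := KGraph {
  kg_obj : countType;
  kg_mor : countType;
  kg_r : kg_mor -> kg_obj;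
  kg_s : kg_mor -> kg_obj;
  kg_id : kg_obj -> kg_mor;
  kg_comp : kg_mor -> kg_mor -> kg_mor;
  kg_d : kg_mor -> deg k;
  kg_r_id : forall v, kg_r (kg_id v) = v;
  kg_s_id : forall v, kg_s (kg_id v) = v;
  kg_r_comp : forall l m, kg_s l = kg_r m -> kg_r (kg_comp l m) = kg_r l;
  kg_s_comp : forall l m, kg_s l = kg_r m -> kg_s (kg_comp l m) = kg_s m;
  kg_id_l : forall l, kg_comp (kg_id (kg_r l)) l = l;
  kg_id_r : forall l, kg_comp l (kg_id (kg_s l)) = l;
  kg_assoc : forall l m p, kg_s l = kg_r m -> kg_s m = kg_r p ->
    kg_comp (kg_comp l m) p = kg_comp l (kg_comp m p);
  kg_d_id : forall v, kg_d (kg_id v) = deg0 k;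
  kg_d_comp : forall l m, kg_s l = kg_r m ->
    kg_d (kg_comp l m) = degD (kg_d l) (kg_d m);
  kg_factor : forall l (m n : deg k), kg_d l = degD m n ->
    exists mu nu, [/\ kg_s mu = kg_r nu, l = kg_comp mu nu,
                      kg_d mu = m & kg_d nu = n] /\
      forall mu' nu', kg_s mu' = kg_r nu' -> l = kg_comp mu' nu' ->
        kg_d mu' = m -> kg_d nu' = n -> mu' = mu /\ nu' = nu
}.

Section KGraphDefs.
Variables (k : nat) (G : kgraph k).

Definition row_finite : Prop :=
  forall (v : kg_obj G) (n : deg k), exists s : seq (kg_mor G),
    forall l, (l \in s) <-> (kg_r l = v /\ kg_d l = n).

Definition no_sources : Prop :=
  forall (v : kg_obj G) (n : deg k), exists l, kg_r l = v /\ kg_d l = n.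
End KGraphDefs.

Section Hilbert.
Variables (R : realType) (V : lmodType R[i]) (ip : V -> V -> R[i]).

Definition hnorm (x : V) : R := Num.sqrt (complex.Re (ip x x)).

Definition inner_product : Prop :=
  [/\ forall (a : R[i]) x y z, ip (a *: x + y) z = a * ip x z + ip y z,
      forall x y, ip x y = (ip y x)^*,
      forall x, 0 <= ip x x
    & forall x, ip x x = 0 -> x = 0].

Definition norm_complete : Prop :=
  forall u : nat -> V,
    (forall eps : R, 0 < eps -> exists N, forall m n, (N <= m)%N -> (N <= n)%N ->
        hnorm (u m - u n) < eps) ->
    exists x, forall eps : R, 0 < eps -> exists N, forall n, (N <= n)%N ->
        hnorm (u n - x) < eps.

Definition hilbert_space : Prop := inner_product /\ norm_complete.

Definition bounded_op (T : V -> V) : Prop :=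
  linear T /\ exists M : R, forall x, hnorm (T x) <= M * hnorm x.

Definition adjoint_of (T Ts : V -> V) : Prop :=
  forall x y, ip (T x) y = ip x (Ts y).

Definition orthonormal_basis (I : Type) (e : I -> V) : Prop :=
  [/\ forall i, ip (e i) (e i) = 1,
      forall i j, i <> j -> ip (e i) (e j) = 0
    & forall x, (forall i, ip x (e i) = 0) -> x = 0].
End Hilbert.

(* Representations of C*(Lambda): t l is the operator t_lambda and     *)
(* ts l its adjoint t_lambda^*.  t_v for a vertex v is t (kg_id v).    *)
Section Rep.
Variables (k : nat) (G : kgraph k) (R : realType) (V : lmodType R[i])
  (ip : V -> V -> R[i]) (t ts : kg_mor G -> V -> V).

Definition partial_isometry (T Ts : V -> V) : Prop :=
  forall x, T (Ts (T x)) = T x.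

Definition is_representation : Prop :=
  [/\ (forall l, bounded_op ip (t l) /\ adjoint_of ip (t l) (ts l)
                  /\ partial_isometry (t l) (ts l)),
      (forall v x, t (kg_id v) (t (kg_id v) x) = t (kg_id v) x) /\
      (forall v x, ts (kg_id v) x = t (kg_id v) x) /\
      (forall v w x, v <> w -> t (kg_id v) (t (kg_id w) x) = 0),
      (forall l m x, kg_s l = kg_r m -> t (kg_comp l m) x = t l (t m x)),
      (forall l x, ts l (t l x) = t (kg_id (kg_s l)) x)
    & (* CK4: sum over (a duplicate-free enumeration of) v Lambda^n *)
      (forall v (n : deg k) (s : seq (kg_mor G)), uniq s ->
         (forall l, (l \in s) <-> (kg_r l = v /\ kg_d l = n)) ->
         forall x, t (kg_id v) x = \sum_(l <- s) t l (ts l x))].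

Definition is_permutative (I : Type) (e : I -> V)
    (J K : kg_mor G -> I -> Prop) (sigma : kg_mor G -> I -> I) : Prop :=
  orthonormal_basis ip e /\
  [/\
      (forall l, [/\ forall i, J l i -> K l (sigma l i),
                     forall i j, J l i -> J l j -> sigma l i = sigma l j -> i = j
                   & forall j, K l j -> (exists2 i, J l i & sigma l i = j)]),
      (forall (n : deg k) i, (exists l, kg_d l = n /\ J l i) /\
                             (exists l, kg_d l = n /\ K l i)),
      (forall l nu, kg_s l = kg_r nu ->
         [/\ (forall i, K nu i -> J l i),
             (forall i, J (kg_comp l nu) i <-> J nu i)
           & (forall i, J nu i -> sigma l (sigma nu i) = sigma (kg_comp l nu) i)]),
      (forall l i, (J l i -> t l (e i) = e (sigma l i)) /\
                   (~ J l i -> t l (e i) = 0))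
    &
      (forall l, (forall i, J l i -> ts l (e (sigma l i)) = e i) /\
         (forall l' j, l' <> l -> kg_d l' = kg_d l -> K l' j -> ts l (e j) = 0))].
End Rep.

(* If i lies in K_l and K_l', write i = sigma_l j.  Condition (d) then gives
   t_l^* e_i = e_j, and, since l' has the same degree as l, also t_l^* e_i = 0;
   so the unit vector e_j would vanish. *)
From HB Require Import structures.
From mathcomp Require Import all_boot all_order all_algebra complex.
From mathcomp Require Import reals.
Set Implicit Arguments.
Import GRing.Theory.
Local Open Scope ring_scope.

Section InnerProduct.
Variables (R : realType) (V : lmodType R[i]) (ip : V -> V -> R[i]).

Lemma ip0l : inner_product ip -> forall y, ip 0 y = 0.
Proof.
case=> ipDl _ _ _ y; apply: (@addrI _ (ip 0 y)).
have := ipDl 1 0 0 y; rewrite scale1r !addr0 mul1r.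
by move/esym.
Qed.

Lemma orthonormal_basis_neq0 (I : Type) (e : I -> V) :
  inner_product ip -> orthonormal_basis ip e -> forall i, e i <> 0.
Proof.
move=> ip_inner [e_unit _ _] i ei0.
by move: (e_unit i); rewrite ei0 (ip0l ip_inner); apply/eqP; rewrite eq_sym oner_neq0.
Qed.

End InnerProduct.

Theorem lemma4p2 (k : nat) (Hk : (0 < k)%N) (G : kgraph k)
    (Hrf : row_finite G) (Hns : no_sources G)
    (R : realType) (V : lmodType R[i]) (ip : V -> V -> R[i])
    (HH : hilbert_space ip)
    (t ts : kg_mor G -> V -> V) (Hrep : is_representation ip t ts)
    (I : Type) (e : I -> V) (J K : kg_mor G -> I -> Prop)
    (sigma : kg_mor G -> I -> I)
    (Hperm : is_permutative ip t ts e J K sigma) :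
  forall (n : deg k) (l l' : kg_mor G),
    kg_d l = n -> kg_d l' = n -> l <> l' ->
    forall i, ~ (K l i /\ K l' i).
Proof.
move=> n l l' dl dl' neq_ll' i [Kli Kl'i].
case: HH => ip_inner _.
case: Hperm => e_basis [sigma_bij _ _ _ cond_d].
have [_ _ /(_ i Kli) [j Jlj sigma_j]] := sigma_bij l.
have [ts_sigma ts_K] := cond_d l.
have ts_ei_ej : ts l (e i) = e j by rewrite -sigma_j ts_sigma.
have ts_ei_0 : ts l (e i) = 0.
  by apply: (ts_K l'); [exact: nesym | rewrite dl dl' |].
apply: (orthonormal_basis_neq0 ip_inner e_basis j).
by rewrite -ts_ei_ej.
Qed.
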